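(* If the semimetric space $(T,\rho_{2,T})$ is complete, then the semimetric space $(T\times[0,\infty),\rho_2)$ is complete.
   Context: $(U_1(t))_{t\in T}$ is a process with uniform $(0,1)$ margins such that the bivariate tail copulas $R_{s,t}(x,y)=\lim_{u\downarrow0}u^{-1}\mathbb{P}\{U_1(s)\le ux,U_1(t)\le uy\}$ exist for all $s,t\in T$, $x,y\ge0$. $\rho_{2,T}(s,t)=[2\{1-R_{s,t}(1,1)\}]^{1/2}$ on $T$ and $\rho_2((s,x),(t,y))=(x-2R_{s,t}(x,y)+y)^{1/2}$ on $T\times[0,\infty)$. *)

From Stdlib Require Import Reals Lra.
Open Scope R_scope.

Record prob_space (Omega : Type) : Type := {
  meas : (Omega -> Prop) -> Prop;
  meas_full : meas (fun _ => True);
  meas_compl : forall A, meas A -> meas (fun w => ~ A w);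
  meas_cunion : forall A : nat -> Omega -> Prop,
      (forall n, meas (A n)) -> meas (fun w => exists n, A n w);
  prob : (Omega -> Prop) -> R;
  prob_nonneg : forall A, meas A -> 0 <= prob A;
  prob_full : prob (fun _ => True) = 1;
  prob_sigma_add : forall A : nat -> Omega -> Prop,
      (forall n, meas (A n)) ->
      (forall n m w, n <> m -> A n w -> A m w -> False) ->
      infinite_sum (fun n => prob (A n)) (prob (fun w => exists n, A n w))
}.
Arguments meas {Omega}.
Arguments prob {Omega}.

Definition random_variable {Omega} (P : prob_space Omega) (X : Omega -> R) : Prop :=
  forall a : R, meas P (fun w => X w <= a).

Definition uniform_margins {Omega T} (P : prob_space Omega) (U : T -> Omega -> R) : Prop :=
  forall t, random_variable P (U t) /\
    forall a, 0 <= a <= 1 -> prob P (fun w => U t w <= a) = a.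

Definition is_tail_copula {Omega T} (P : prob_space Omega) (U : T -> Omega -> R)
    (Rc : T -> T -> R -> R -> R) : Prop :=
  forall s t x y, 0 <= x -> 0 <= y ->
    limit1_in (fun u => / u * prob P (fun w => U s w <= u * x /\ U t w <= u * y))
              (fun u => 0 < u) (Rc s t x y) 0.

Definition rho2T {T} (Rc : T -> T -> R -> R -> R) (s t : T) : R :=
  sqrt (2 * (1 - Rc s t 1 1)).

Definition rho2 {T} (Rc : T -> T -> R -> R -> R) (p q : T * R) : R :=
  sqrt (snd p - 2 * Rc (fst p) (fst q) (snd p) (snd q) + snd q).

Definition cauchy_seq {X} (d : X -> X -> R) (a : nat -> X) : Prop :=
  forall eps, 0 < eps -> exists N, forall n m, (n >= N)%nat -> (m >= N)%nat -> d (a n) (a m) < eps.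

Definition complete_on {X} (A : X -> Prop) (d : X -> X -> R) : Prop :=
  forall a : nat -> X, (forall n, A (a n)) -> cauchy_seq d a ->
    exists p, A p /\ Un_cv (fun n => d (a n) p) 0.

(* Work with D = rho2^2.  Passing to the limit u -> 0 in elementary
   inequalities between the probabilities P{U s <= u x, U t <= u y}
   shows that D behaves like a metric on the level sets:
   |x - y| <= D((s,x),(t,y)), D((s,x),(s,y)) = |x - y|,
   D((s,c),(t,c)) = c rho_{2,T}(s,t)^2 by homogeneity of the tail copula,
   and D itself satisfies the triangle inequality, the limit of
   P(A /\ B) + P(B /\ C) <= P(B) + P(A /\ C).
   Given a rho2-Cauchy sequence (s_n, x_n), the levels x_n are Cauchy
   with limit c >= 0.  If c = 0 the sequence converges to any point of
   level 0, since D(p, (t,0)) = snd p.  If c > 0, comparing with the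
   points (s_n, c) of level c shows that (s_n) is rho_{2,T}-Cauchy, and
   its limit t yields the limit (t, c). *)

From Stdlib Require Import Reals Lra Lia FunctionalExtensionality PropExtensionality Classical.
Open Scope R_scope.

Lemma Un_cv_const (c : R) : Un_cv (fun _ => c) c.
Proof.
  intros eps Heps; exists 0%nat; intros n _.
  unfold Rdist; rewrite Rminus_diag, Rabs_R0; lra.
Qed.

Lemma Un_cv_sqrt0 (u : nat -> R) : Un_cv u 0 -> Un_cv (fun n => sqrt (u n)) 0.
Proof.
  intros Hu; rewrite <- sqrt_0.
  apply continuity_seq; [apply continuity_pt_sqrt, Rle_refl | exact Hu].
Qed.

Lemma Un_cv_of_sqrt0 (u : nat -> R) : (forall n, 0 <= u n) ->
  Un_cv (fun n => sqrt (u n)) 0 -> Un_cv u 0.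
Proof.
  intros Hu0 Hu; rewrite <- (Rmult_0_r 0).
  apply (Un_cv_ext (fun n => sqrt (u n) * sqrt (u n))); [intro n; apply sqrt_sqrt, Hu0|].
  apply CV_mult; exact Hu.
Qed.

Lemma Un_cv_squeeze0 (u v : nat -> R) : (forall n, 0 <= u n <= v n) ->
  Un_cv v 0 -> Un_cv u 0.
Proof.
  intros Huv Hv eps Heps; destruct (Hv eps Heps) as [N HN]; exists N; intros n Hn.
  specialize (HN n Hn); specialize (Huv n); unfold Rdist in *.
  rewrite Rminus_0_r, Rabs_right in * by lra; lra.
Qed.

Lemma cauchy_seq_of_sqrt {X : Type} (d : X -> X -> R) (a : nat -> X) :
  cauchy_seq (fun p q => sqrt (d p q)) a -> cauchy_seq d a.
Proof.
  intros Ha eps Heps; destruct (Ha (sqrt eps) (sqrt_lt_R0 _ Heps)) as [N HN].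
  exists N; intros n m Hn Hm; apply sqrt_lt_0_alt, HN; auto.
Qed.

Section Probability.

Variables (Omega : Type) (P : prob_space Omega).

Lemma event_ext (E F : Omega -> Prop) : (forall w, E w <-> F w) -> E = F.
Proof.
  intros HEF; apply functional_extensionality; intro w.
  apply propositional_extensionality, HEF.
Qed.

Lemma meas_ext (E F : Omega -> Prop) :
  (forall w, E w <-> F w) -> meas P E -> meas P F.
Proof. intros HEF; rewrite (event_ext E F HEF); auto. Qed.

Lemma prob_ext (E F : Omega -> Prop) :
  (forall w, E w <-> F w) -> prob P E = prob P F.
Proof. intros HEF; rewrite (event_ext E F HEF); reflexivity. Qed.

Lemma meas_empty : meas P (fun _ => False).
Proof.
  apply (meas_ext (fun _ => ~ True)); [tauto|].
  apply meas_compl, meas_full.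
Qed.

Lemma meas_and (E F : Omega -> Prop) :
  meas P E -> meas P F -> meas P (fun w => E w /\ F w).
Proof.
  intros HE HF.
  set (G := fun n : nat => match n with O => fun w => ~ E w | _ => fun w => ~ F w end).
  assert (HG : forall n, meas P (G n)) by (intros [|n]; apply meas_compl; auto).
  apply (meas_ext (fun w => ~ exists n, G n w)).
  - intro w; split.
    + intro HnG; split; apply NNPP; intro Hc; apply HnG;
        [exists 0%nat | exists 1%nat]; exact Hc.
    + intros [HEw HFw] [[|n] Hn]; auto.
  - apply meas_compl, meas_cunion, HG.
Qed.

Lemma meas_and_not (E F : Omega -> Prop) :
  meas P E -> meas P F -> meas P (fun w => E w /\ ~ F w).
Proof. intros HE HF; apply meas_and, meas_compl; auto. Qed.

Lemma prob_empty : prob P (fun _ => False) = 0.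
Proof.
  (* the terms [c] of the convergent series [sum_n P(empty)] must tend to 0 *)
  set (c := prob P (fun _ => False)).
  assert (Hsum : infinite_sum (fun _ => c) c).
  { assert (Hsum := prob_sigma_add _ P (fun _ _ => False) (fun _ => meas_empty)
                      (fun _ _ _ _ H _ => H)).
    rewrite (prob_ext _ (fun _ => False)) in Hsum by firstorder.
    exact Hsum. }
  assert (Hdiff : Un_cv (fun n => sum_f_R0 (fun _ => c) (S n) - sum_f_R0 (fun _ => c) n)
                        (c - c)).
  { apply CV_minus; [|exact Hsum].
    apply (CV_shift' _ 1 c) in Hsum.
    apply (Un_cv_ext _ _ (fun n => f_equal _ (Nat.add_1_r n)) c Hsum). }
  rewrite Rminus_diag in Hdiff.
  apply (UL_sequence (fun _ => c)); [apply Un_cv_const|].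
  revert Hdiff; apply Un_cv_ext; intro n; rewrite tech5; ring.
Qed.

Lemma prob_or_disjoint (E F : Omega -> Prop) :
  meas P E -> meas P F -> (forall w, E w -> F w -> False) ->
  prob P (fun w => E w \/ F w) = prob P E + prob P F.
Proof.
  intros HE HF Hdisj.
  set (A := fun n : nat => match n with O => E | S O => F | _ => fun _ => False end).
  assert (HA : forall n, meas P (A n)) by (intros [|[|n]]; auto using meas_empty).
  assert (HAdisj : forall n m w, n <> m -> A n w -> A m w -> False).
  { intros [|[|n]] [|[|m]] w Hnm; simpl; try tauto; try congruence; eauto. }
  assert (Hsum := prob_sigma_add _ P A HA HAdisj).
  rewrite (prob_ext _ (fun w => E w \/ F w)) in Hsum.
  2:{ intro w; split.
      - intros [[|[|n]] Hn]; simpl in Hn; tauto.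
      - intros [Hw|Hw]; [exists 0%nat | exists 1%nat]; exact Hw. }
  apply (uniqueness_sum _ _ _ Hsum).
  assert (Hpartial : forall k, sum_f_R0 (fun n => prob P (A n)) (S k) = prob P E + prob P F).
  { induction k as [|k IHk]; [reflexivity|].
    rewrite tech5, IHk; simpl; rewrite prob_empty; ring. }
  intros eps Heps; exists 1%nat; intros [|n] Hn; [lia|].
  rewrite Hpartial; unfold Rdist; rewrite Rminus_diag, Rabs_R0; lra.
Qed.

Lemma prob_split (E F : Omega -> Prop) : meas P E -> meas P F ->
  prob P E = prob P (fun w => E w /\ F w) + prob P (fun w => E w /\ ~ F w).
Proof.
  intros HE HF.
  rewrite <- prob_or_disjoint; auto using meas_and, meas_and_not; [|tauto].
  apply prob_ext; intro w; destruct (classic (F w)); tauto.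
Qed.

Lemma prob_le (E F : Omega -> Prop) : meas P E -> meas P F ->
  (forall w, E w -> F w) -> prob P E <= prob P F.
Proof.
  intros HE HF HEF.
  rewrite (prob_split F E HF HE), (prob_ext (fun w => F w /\ E w) E) by firstorder.
  assert (H := prob_nonneg _ P _ (meas_and_not F E HF HE)); lra.
Qed.

(* [A /\ B] and [B /\ C] lie in [B] and overlap in [A /\ B /\ C], which lies in [A /\ C]. *)
Lemma prob_and_triangle (A B C : Omega -> Prop) :
  meas P A -> meas P B -> meas P C ->
  prob P (fun w => A w /\ B w) + prob P (fun w => B w /\ C w)
  <= prob P B + prob P (fun w => A w /\ C w).
Proof.
  intros HA HB HC.
  assert (HAB := meas_and _ _ HA HB).
  rewrite (prob_split _ C HAB HC).
  assert (HABC : prob P (fun w => (A w /\ B w) /\ C w) <= prob P (fun w => A w /\ C w))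
    by (apply prob_le; auto using meas_and; tauto).
  assert (HB' : prob P (fun w => ((A w /\ B w) /\ ~ C w) \/ (B w /\ C w)) <= prob P B).
  { apply prob_le; [|auto|tauto].
    apply (meas_ext (fun w => ~ (~ ((A w /\ B w) /\ ~ C w) /\ ~ (B w /\ C w)))).
    - intro w; split; [intro H; apply NNPP; tauto | tauto].
    - apply meas_compl, meas_and; apply meas_compl; auto using meas_and, meas_and_not. }
  rewrite prob_or_disjoint in HB'; auto using meas_and, meas_and_not; [lra | tauto].
Qed.

End Probability.

Lemma limit1_in_ge0 (f : R -> R) (L d : R) : 0 < d ->
  (forall u, 0 < u < d -> 0 <= f u) -> limit1_in f (fun u => 0 < u) L 0 -> 0 <= L.
Proof.
  intros Hd Hf HL; apply Rnot_lt_le; intro HLneg.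
  destruct (HL (- L)) as [a [Ha Hnear]]; [lra|].
  set (u := Rmin d a / 2).
  assert (Hu : 0 < u < Rmin d a) by (unfold u; apply Rmin_case; lra).
  assert (Hud := Rmin_l d a); assert (Hua := Rmin_r d a).
  specialize (Hnear u); specialize (Hf u); simpl in Hnear; unfold Rdist in Hnear.
  rewrite Rminus_0_r, Rabs_right in Hnear by lra.
  assert (Hfu : 0 <= f u) by (apply Hf; lra).
  assert (Hclose : Rabs (f u - L) < - L) by (apply Hnear; lra).
  rewrite Rabs_right in Hclose; lra.
Qed.

Lemma limit1_in_le (f g : R -> R) (Lf Lg d : R) : 0 < d ->
  (forall u, 0 < u < d -> f u <= g u) ->
  limit1_in f (fun u => 0 < u) Lf 0 -> limit1_in g (fun u => 0 < u) Lg 0 -> Lf <= Lg.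
Proof.
  intros Hd Hfg Hf Hg.
  enough (0 <= Lg - Lf) by lra.
  apply (limit1_in_ge0 (fun u => g u - f u) _ d Hd); [intros u Hu; specialize (Hfg u Hu); lra|].
  apply limit_minus; auto.
Qed.

Lemma limit1_in_unique (f : R -> R) (L1 L2 : R) :
  limit1_in f (fun u => 0 < u) L1 0 -> limit1_in f (fun u => 0 < u) L2 0 -> L1 = L2.
Proof.
  apply single_limit; intros a Ha; exists (a / 2); split; [lra|].
  unfold Rdist; rewrite Rminus_0_r, Rabs_right; lra.
Qed.

Lemma limit1_in_scale (f : R -> R) (L c : R) : 0 < c ->
  limit1_in f (fun u => 0 < u) L 0 -> limit1_in (fun u => f (c * u)) (fun u => 0 < u) L 0.
Proof.
  intros Hc HL eps Heps; destruct (HL eps Heps) as [a [Ha Hnear]].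
  exists (a / c); split; [apply Rdiv_lt_0_compat; lra|].
  intros u [Hu Hua]; simpl in *; unfold Rdist in *.
  rewrite Rminus_0_r, Rabs_right in Hua by lra.
  apply Hnear; split; [nra|].
  rewrite Rminus_0_r, Rabs_right by nra.
  apply (Rmult_lt_compat_l c) in Hua; [|lra].
  replace (c * (a / c)) with a in Hua by (field; lra); exact Hua.
Qed.

Lemma limit1_in_const (c x0 : R) (D : R -> Prop) : limit1_in (fun _ => c) D c x0.
Proof. exact (limit_free (fun _ => c) D 0 x0). Qed.

Lemma scale_le_1 (x u : R) : 0 <= x -> 0 < u < / (x + 1) -> 0 <= u * x <= 1.
Proof.
  intros Hx [Hu Hux]; split; [nra|].
  apply (Rmult_lt_compat_r (x + 1)) in Hux; [|lra].
  rewrite Rinv_l in Hux by lra; nra.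
Qed.

Definition rho2_sq {T : Type} (Rc : T -> T -> R -> R -> R) (p q : T * R) : R :=
  snd p - 2 * Rc (fst p) (fst q) (snd p) (snd q) + snd q.

Lemma rho2T_rho2_sq {T : Type} (Rc : T -> T -> R -> R -> R) (s t : T) :
  rho2T Rc s t = sqrt (rho2_sq Rc (s, 1) (t, 1)).
Proof. unfold rho2T, rho2_sq; simpl; f_equal; ring. Qed.

Section TailCopula.

Variables (Omega T : Type) (P : prob_space Omega) (U : T -> Omega -> R)
  (Rc : T -> T -> R -> R -> R).
Hypothesis HU : uniform_margins P U.
Hypothesis HR : is_tail_copula P U Rc.

Definition tail_quotient (s t : T) (x y u : R) : R :=
  / u * prob P (fun w => U s w <= u * x /\ U t w <= u * y).

Lemma meas_tail_event (s t : T) (a b : R) :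
  meas P (fun w => U s w <= a /\ U t w <= b).
Proof. apply meas_and; apply HU. Qed.

Lemma margin_quotient (t : T) (x u : R) :
  0 < u -> 0 <= u * x <= 1 -> / u * prob P (fun w => U t w <= u * x) = x.
Proof. intros Hu Hux; rewrite (proj2 (HU t)) by exact Hux; field; lra. Qed.

Lemma tail_quotient_le_l (s t : T) (x y u : R) :
  0 < u -> 0 <= u * x <= 1 -> tail_quotient s t x y u <= x.
Proof.
  intros Hu Hux; eapply Rle_trans; [|right; exact (margin_quotient s x u Hu Hux)].
  apply Rmult_le_compat_l; [left; apply Rinv_0_lt_compat; lra|].
  apply prob_le; [apply meas_tail_event | apply HU | tauto].
Qed.

Lemma tail_quotient_le_r (s t : T) (x y u : R) :
  0 < u -> 0 <= u * y <= 1 -> tail_quotient s t x y u <= y.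
Proof.
  intros Hu Huy; eapply Rle_trans; [|right; exact (margin_quotient t y u Hu Huy)].
  apply Rmult_le_compat_l; [left; apply Rinv_0_lt_compat; lra|].
  apply prob_le; [apply meas_tail_event | apply HU | tauto].
Qed.

Lemma tail_copula_ge0 (s t : T) (x y : R) :
  0 <= x -> 0 <= y -> 0 <= Rc s t x y.
Proof.
  intros Hx Hy; apply (limit1_in_ge0 (tail_quotient s t x y) _ 1 Rlt_0_1); [|exact (HR s t x y Hx Hy)].
  intros u Hu; apply Rmult_le_pos; [left; apply Rinv_0_lt_compat; lra|].
  apply prob_nonneg, meas_tail_event.
Qed.

Lemma tail_copula_le_l (s t : T) (x y : R) :
  0 <= x -> 0 <= y -> Rc s t x y <= x.
Proof.
  intros Hx Hy.
  apply (limit1_in_le (tail_quotient s t x y) (fun _ => x) _ _ _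
           (Rinv_0_lt_compat (x + 1) ltac:(lra)));
    [| exact (HR s t x y Hx Hy) | apply limit1_in_const].
  intros u Hu; apply tail_quotient_le_l; [lra | apply scale_le_1; auto].
Qed.

Lemma tail_copula_le_r (s t : T) (x y : R) :
  0 <= x -> 0 <= y -> Rc s t x y <= y.
Proof.
  intros Hx Hy.
  apply (limit1_in_le (tail_quotient s t x y) (fun _ => y) _ _ _
           (Rinv_0_lt_compat (y + 1) ltac:(lra)));
    [| exact (HR s t x y Hx Hy) | apply limit1_in_const].
  intros u Hu; apply tail_quotient_le_r; [lra | apply scale_le_1; auto].
Qed.

Lemma tail_quotient_diag (s : T) (x y u : R) :
  0 < u -> 0 <= u * Rmin x y <= 1 -> tail_quotient s s x y u = Rmin x y.
Proof.
  intros Hu Hum; unfold tail_quotient.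
  rewrite (prob_ext _ _ _ (fun w => U s w <= u * Rmin x y)); [apply margin_quotient; auto|].
  intro w; split.
  - intros [Hwx Hwy]; unfold Rmin; destruct Rle_dec; auto.
  - intro Hw; split; (eapply Rle_trans; [exact Hw | apply Rmult_le_compat_l; [lra|]]);
      [apply Rmin_l | apply Rmin_r].
Qed.

Lemma tail_copula_diag (s : T) (x y : R) :
  0 <= x -> 0 <= y -> Rc s s x y = Rmin x y.
Proof.
  intros Hx Hy; set (m := Rmin x y).
  assert (Hm : 0 <= m) by (unfold m; apply Rmin_case; auto).
  assert (Hd : 0 < / (m + 1)) by (apply Rinv_0_lt_compat; lra).
  assert (Hq : forall u, 0 < u < / (m + 1) -> tail_quotient s s x y u = m)
    by (intros u Hu; apply tail_quotient_diag; [lra | apply scale_le_1; auto]).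
  apply Rle_antisym.
  - apply (limit1_in_le (tail_quotient s s x y) (fun _ => m) _ _ _ Hd);
      [intros u Hu; rewrite Hq; auto; lra | exact (HR s s x y Hx Hy) | apply limit1_in_const].
  - apply (limit1_in_le (fun _ => m) (tail_quotient s s x y) _ _ _ Hd);
      [intros u Hu; rewrite Hq; auto; lra | apply limit1_in_const | exact (HR s s x y Hx Hy)].
Qed.

Lemma tail_quotient_scale (s t : T) (x y c u : R) : 0 < c -> 0 < u ->
  tail_quotient s t (c * x) (c * y) u = c * tail_quotient s t x y (c * u).
Proof.
  intros Hc Hu; unfold tail_quotient.
  rewrite (prob_ext _ _ _ (fun w => U s w <= c * u * x /\ U t w <= c * u * y))
    by (intro w; rewrite !Rmult_assoc, !(Rmult_comm u), <- !Rmult_assoc; tauto).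
  field; lra.
Qed.

Lemma tail_copula_scale (s t : T) (x y c : R) : 0 <= x -> 0 <= y -> 0 < c ->
  Rc s t (c * x) (c * y) = c * Rc s t x y.
Proof.
  intros Hx Hy Hc.
  apply (limit1_in_unique (tail_quotient s t (c * x) (c * y))); [apply HR; nra|].
  apply (limit1_ext (fun u => c * tail_quotient s t x y (c * u)));
    [intros u Hu; symmetry; apply tail_quotient_scale; auto|].
  apply limit_mul; [apply limit1_in_const|].
  apply (limit1_in_scale (tail_quotient s t x y)); auto; apply HR; auto.
Qed.

Lemma tail_copula_triangle (s t r : T) (x y z : R) : 0 <= x -> 0 <= y -> 0 <= z ->
  Rc s t x y + Rc t r y z <= y + Rc s r x z.
Proof.
  intros Hx Hy Hz.
  apply (limit1_in_le (fun u => tail_quotient s t x y u + tail_quotient t r y z u)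
           (fun u => y + tail_quotient s r x z u) _ _ _ (Rinv_0_lt_compat (y + 1) ltac:(lra))).
  - intros u Hu.
    assert (Hmargin := margin_quotient t y u ltac:(lra) (scale_le_1 y u Hy Hu)).
    unfold tail_quotient; rewrite <- Hmargin at 1; rewrite <- !Rmult_plus_distr_l.
    apply Rmult_le_compat_l; [left; apply Rinv_0_lt_compat; lra|].
    apply prob_and_triangle; apply HU.
  - apply limit_plus; apply HR; auto.
  - apply limit_plus; [apply limit1_in_const | apply HR; auto].
Qed.

Lemma rho2_sq_ge_abs (p q : T * R) : 0 <= snd p -> 0 <= snd q ->
  Rabs (snd p - snd q) <= rho2_sq Rc p q.
Proof.
  intros Hp Hq; unfold rho2_sq.
  assert (Hl := tail_copula_le_l (fst p) (fst q) _ _ Hp Hq).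
  assert (Hr := tail_copula_le_r (fst p) (fst q) _ _ Hp Hq).
  unfold Rabs; destruct Rcase_abs; lra.
Qed.

Lemma rho2_sq_ge0 (p q : T * R) : 0 <= snd p -> 0 <= snd q -> 0 <= rho2_sq Rc p q.
Proof. intros Hp Hq; eapply Rle_trans; [apply Rabs_pos | apply rho2_sq_ge_abs; auto]. Qed.

Lemma rho2_sq_triangle (p q r : T * R) : 0 <= snd p -> 0 <= snd q -> 0 <= snd r ->
  rho2_sq Rc p r <= rho2_sq Rc p q + rho2_sq Rc q r.
Proof.
  intros Hp Hq Hr; unfold rho2_sq.
  assert (H := tail_copula_triangle (fst p) (fst q) (fst r) _ _ _ Hp Hq Hr); lra.
Qed.

Lemma rho2_sq_same_index (s : T) (x y : R) : 0 <= x -> 0 <= y ->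
  rho2_sq Rc (s, x) (s, y) = Rabs (x - y).
Proof.
  intros Hx Hy; unfold rho2_sq; simpl; rewrite tail_copula_diag by auto.
  unfold Rabs, Rmin; destruct Rcase_abs, Rle_dec; lra.
Qed.

Lemma rho2_sq_same_level (s t : T) (c : R) : 0 < c ->
  rho2_sq Rc (s, c) (t, c) = c * rho2_sq Rc (s, 1) (t, 1).
Proof.
  intros Hc; unfold rho2_sq; simpl.
  rewrite <- (Rmult_1_r c) at 2 3; rewrite tail_copula_scale by lra; ring.
Qed.

Lemma rho2_sq_level0 (p : T * R) (t : T) : 0 <= snd p -> rho2_sq Rc p (t, 0) = snd p.
Proof.
  intros Hp; unfold rho2_sq; simpl.
  assert (Hr := tail_copula_le_r (fst p) t _ _ Hp (Rle_refl 0)).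
  assert (H0 := tail_copula_ge0 (fst p) t _ _ Hp (Rle_refl 0)); lra.
Qed.

Lemma rho2_sq_index_bound (p q : T * R) (c : R) : 0 <= snd p -> 0 <= snd q -> 0 < c ->
  c * rho2_sq Rc (fst p, 1) (fst q, 1)
  <= Rabs (snd p - c) + rho2_sq Rc p q + Rabs (snd q - c).
Proof.
  intros Hp Hq Hc; rewrite <- rho2_sq_same_level by exact Hc.
  destruct p as [s x], q as [t y]; simpl in *.
  assert (H1 := rho2_sq_triangle (s, c) (s, x) (t, y) ltac:(simpl; lra) Hp Hq).
  assert (H2 := rho2_sq_triangle (s, c) (t, y) (t, c) ltac:(simpl; lra) Hq ltac:(simpl; lra)).
  rewrite rho2_sq_same_index, Rabs_minus_sym in H1 by lra.
  rewrite rho2_sq_same_index in H2 by lra; lra.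
Qed.

Lemma rho2_sq_level_bound (p : T * R) (t : T) (c : R) : 0 <= snd p -> 0 < c ->
  rho2_sq Rc p (t, c) <= Rabs (snd p - c) + c * rho2_sq Rc (fst p, 1) (t, 1).
Proof.
  intros Hp Hc; rewrite <- rho2_sq_same_level by exact Hc.
  destruct p as [s x]; simpl in *.
  assert (H := rho2_sq_triangle (s, x) (s, c) (t, c) Hp ltac:(simpl; lra) ltac:(simpl; lra)).
  rewrite rho2_sq_same_index in H by lra; lra.
Qed.

Section Sequence.

Variable a : nat -> T * R.
Hypothesis Ha : forall n, 0 <= snd (a n).

Lemma level_cauchy : cauchy_seq (rho2 Rc) a -> Cauchy_crit (fun n => snd (a n)).
Proof.
  intros Hcauchy eps Heps.
  destruct (cauchy_seq_of_sqrt (rho2_sq Rc) a Hcauchy eps Heps) as [N HN].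
  exists N; intros n m Hn Hm; unfold Rdist.
  eapply Rle_lt_trans; [apply rho2_sq_ge_abs; auto | apply HN; auto].
Qed.

Lemma index_cauchy (c : R) : 0 < c -> cauchy_seq (rho2 Rc) a ->
  Un_cv (fun n => snd (a n)) c -> cauchy_seq (rho2T Rc) (fun n => fst (a n)).
Proof.
  intros Hc Hcauchy Hlevel eps Heps.
  set (delta := c * (eps * eps) / 3).
  assert (Hdelta : 0 < delta) by (unfold delta; assert (0 < eps * eps) by nra; nra).
  destruct (cauchy_seq_of_sqrt (rho2_sq Rc) a Hcauchy delta Hdelta) as [N1 HN1].
  destruct (Hlevel delta Hdelta) as [N2 HN2].
  exists (N1 + N2)%nat; intros n m Hn Hm.
  assert (Hbound := rho2_sq_index_bound (a n) (a m) c (Ha n) (Ha m) Hc).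
  assert (Hnm := HN1 n m ltac:(lia) ltac:(lia)).
  assert (Hxn := HN2 n ltac:(lia)); assert (Hxm := HN2 m ltac:(lia)).
  unfold Rdist in Hxn, Hxm.
  assert (Hsq : rho2_sq Rc (fst (a n), 1) (fst (a m), 1) < eps * eps).
  { apply (Rmult_lt_reg_l c); [exact Hc|]; unfold delta in *; lra. }
  rewrite rho2T_rho2_sq, <- (sqrt_square eps) by lra.
  apply sqrt_lt_1_alt; split; [apply rho2_sq_ge0; simpl; lra | exact Hsq].
Qed.

Lemma cv_level0 (t : T) : Un_cv (fun n => snd (a n)) 0 ->
  Un_cv (fun n => rho2 Rc (a n) (t, 0)) 0.
Proof.
  intros Hlevel; apply Un_cv_sqrt0.
  apply (Un_cv_ext (fun n => snd (a n))); [|exact Hlevel].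
  intro n; symmetry; apply rho2_sq_level0, Ha.
Qed.

Lemma cv_level_pos (t : T) (c : R) : 0 < c -> Un_cv (fun n => snd (a n)) c ->
  Un_cv (fun n => rho2T Rc (fst (a n)) t) 0 ->
  Un_cv (fun n => rho2 Rc (a n) (t, c)) 0.
Proof.
  intros Hc Hlevel Hindex; apply Un_cv_sqrt0.
  apply (Un_cv_squeeze0 _ (fun n => Rabs (snd (a n) - c) + c * rho2_sq Rc (fst (a n), 1) (t, 1))).
  - intro n; split; [apply rho2_sq_ge0; simpl; auto; lra | apply rho2_sq_level_bound; auto].
  - replace 0 with (Rabs (c - c) + c * 0) by (rewrite Rminus_diag, Rabs_R0; ring).
    apply CV_plus; [apply cv_cvabs, CV_minus; [exact Hlevel | apply Un_cv_const]|].
    apply CV_mult; [apply Un_cv_const|].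
    apply Un_cv_of_sqrt0; [intro n; apply rho2_sq_ge0; simpl; lra|].
    apply (Un_cv_ext _ _ (fun n => rho2T_rho2_sq Rc (fst (a n)) t) 0 Hindex).
Qed.

End Sequence.

End TailCopula.

Theorem lemmaA9 (Omega T : Type) (P : prob_space Omega) (U : T -> Omega -> R)
    (Rc : T -> T -> R -> R -> R) :
  uniform_margins P U ->
  is_tail_copula P U Rc ->
  complete_on (fun _ : T => True) (rho2T Rc) ->
  complete_on (fun p : T * R => 0 <= snd p) (rho2 Rc).
Proof.
  intros HU HR Hcomplete a Ha Hcauchy.
  destruct (R_complete _ (level_cauchy _ _ _ _ _ HU HR a Ha Hcauchy)) as [c Hlevel].
  assert (Hc : 0 <= c)
    by exact (Rle_cv_lim Ha (Un_cv_const 0) Hlevel).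
  destruct (Rle_lt_or_eq_dec 0 c Hc) as [Hcpos | <-].
  - destruct (Hcomplete (fun n => fst (a n)) (fun _ => I)
                (index_cauchy _ _ _ _ _ HU HR a Ha c Hcpos Hcauchy Hlevel)) as [t [_ Hindex]].
    exists (t, c); split; [simpl; lra|].
    exact (cv_level_pos _ _ _ _ _ HU HR a Ha t c Hcpos Hlevel Hindex).
  - exists (fst (a 0%nat), 0); split; [simpl; lra|].
    exact (cv_level0 _ _ _ _ _ HU HR a Ha _ Hlevel).
Qed.
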